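(* Assume the three-space setting of the context. There exist $\epsilon_0>0$, $D'>0$ and $\lambda'>0$ such that for all $\epsilon\in I$ with $|\epsilon|\le\epsilon_0$, all $\omega\in\Omega'$ and all $n\in\mathbb N$: \[ \|\mathcal L^n_{\omega,\epsilon}h\|_{ss}\le D'e^{-\lambda' n}\|h\|_{ss}\ \ \text{for }h\in\mathcal B_{ss}^0,\qquad \|\mathcal L^n_{\omega,\epsilon}h\|_{s}\le D'e^{-\lambda' n}\|h\|_{s}\ \ \text{for }h\in\mathcal B_{s}^0. \]
   Context: $(\Omega,\mathcal F,\mathbb P)$ is a probability space, $\sigma$ an invertible measurable $\mathbb P$-preserving ergodic map. $\mathcal B_{ss}\subset\mathcal B_s\subset\mathcal B_w$ are Banach spaces with norms $\|\cdot\|_w\le\|\cdot\|_s$ on $\mathcal B_s$ and $\|\cdot\|_s\le\|\cdot\|_{ss}$ on $\mathcal B_{ss}$. $\psi$ is a nonzero bounded linear functional on $\mathcal B_s$ with a bounded extension to $\mathcal B_w$ (and restriction to $\mathcal B_{ss}$); $\mathcal B_{x}^0:=\{h\in\mathcal B_x:\psi(h)=0\}$ for $x\in\{ss,s,w\}$. $I\ni0$ is an interval; for $\epsilon\in I$, $\omega\in\Omega$, $\mathcal L_{\omega,\epsilon}$ is a bounded operator on each of the three spaces, and $\omega\mapsto\mathcal L_{\omega,\epsilon}h$ is measurable for each $h\in\mathcal B_s$ (resp. $h\in\mathcal B_{ss}$) and each $\epsilon$. $\mathcal L_\omega:=\mathcal L_{\omega,0}$, $\mathcal L^n_{\omega,\epsilon}:=\mathcal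 L_{\sigma^{n-1}\omega,\epsilon}\circ\cdots\circ\mathcal L_{\omega,\epsilon}$. There are $C,D,\lambda>0$, $\lambda_1\in(0,1)$ and a measurable $\sigma$-invariant $\Omega'\subset\Omega$, $\mathbb P(\Omega')=1$, such that for all $\epsilon\in I$, $\omega\in\Omega'$, $n\in\mathbb N$: $\|\mathcal L^n_\omega h\|_s\le De^{-\lambda n}\|h\|_s$ ($h\in\mathcal B_s^0$); $\|\mathcal L^n_\omega h\|_{ss}\le De^{-\lambda n}\|h\|_{ss}$ ($h\in\mathcal B_{ss}^0$); $\|\mathcal L^n_{\omega,\epsilon}h\|_s\le C\lambda_1^n\|h\|_s+C\|h\|_w$ ($h\in\mathcal B_s$); $\|\mathcal L^n_{\omega,\epsilon}h\|_{ss}\le C\lambda_1^n\|h\|_{ss}+C\|h\|_s$ ($h\in\mathcal B_{ss}$); $\|(\mathcal L_{\omega,\epsilon}-\mathcal L_\omega)h\|_w\le C|\epsilon|\|h\|_s$ ($h\in\mathcal B_s$); $\|(\mathcal L_{\omega,\epsilon}-\mathcal L_\omega)h\|_s\le C|\epsilon|\|h\|_{ss}$ ($h\in\mathcal B_{ss}$); $\|\mathcal L^n_{\omega,\epsilon}\|_{\mathcal B_w\to\mathcal B_w}\le C$; $\psi(\mathcal L_{\omega,\epsilon}h)=\psi(h)$ ($h\in\mathcal B_s$). *)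

From HB Require Import structures.
From mathcomp Require Import all_boot all_order all_algebra.
From mathcomp Require Import all_classical all_reals all_analysis.
Set Implicit Arguments. Unset Strict Implicit. Unset Printing Implicit Defensive.
Import Order.TTheory GRing.Theory Num.Theory.
Local Open Scope classical_set_scope.
Local Open Scope ring_scope.

Section Defs.
Variables (R : realType) (V : lmodType R).

Definition interval_of (I : set R) : Prop :=
  forall x y z, I x -> I z -> x <= y -> y <= z -> I y.

Definition subspace_of (S : set V) : Prop :=
  S 0 /\ forall (a : R) x y, S x -> S y -> S (a *: x + y).

Definition norm_on (S : set V) (n : V -> R) : Prop :=
  [/\ forall x, S x -> 0 <= n x,
      forall x, S x -> n x = 0 -> x = 0,
      forall (a : R) x, S x -> n (a *: x) = `|a| * n x
    & forall x y, S x -> S y -> n (x + y) <= n x + n y].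

Definition complete_on (S : set V) (n : V -> R) : Prop :=
  forall u : nat -> V, (forall k, S (u k)) ->
    (forall e, 0 < e -> exists N, forall k l, (N <= k)%N -> (N <= l)%N -> n (u k - u l) < e) ->
    exists x, S x /\ forall e, 0 < e -> exists N, forall k, (N <= k)%N -> n (u k - x) < e.

Definition banach_on (S : set V) (n : V -> R) : Prop :=
  [/\ subspace_of S, norm_on S n & complete_on S n].

Definition linear_map (f : V -> V) : Prop :=
  forall (a : R) x y, f (a *: x + y) = a *: f x + f y.

Definition linear_functional (f : V -> R) : Prop :=
  forall (a : R) x y, f (a *: x + y) = a * f x + f y.

Definition bounded_op_on (S : set V) (n : V -> R) (f : V -> V) : Prop :=
  (forall x, S x -> S (f x)) /\ exists K : R, forall x, S x -> n (f x) <= K * n x.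

End Defs.

(* iterated cocycle: Lit sigma L n w = L (sigma^(n-1) w) o ... o L w *)
Fixpoint Lit {T V : Type} (sigma : T -> T) (L : T -> V -> V) (n : nat) (w : T) (h : V)
  : V :=
  match n with
  | 0%N => h
  | m.+1 => Lit sigma L m (sigma w) (L w h)
  end.

(* measurability of w |-> F w with values in (S, n), w.r.t. the sigma-algebra
   generated by the open n-balls of S *)
Definition ball_measurable {d} {T : measurableType d} {R : realType} {V : lmodType R}
  (S : set V) (n : V -> R) (F : T -> V) : Prop :=
  forall c r, S c -> measurable [set w | n (F w - c) < r].

From HB Require Import structures.
From mathcomp Require Import all_boot all_order all_algebra all_classical all_reals all_analysis.
From mathcomp Require Import ring lra.
Set Implicit Arguments. Unset Strict Implicit. Unset Printing Implicit Defensive.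
Import Order.TTheory GRing.Theory Num.Theory numFieldNormedType.Exports.
Local Open Scope classical_set_scope.
Local Open Scope ring_scope.

(* Let a and b be a strong and a weak norm (the pairs (ss, s) and (s, w)), F the perturbed
   and G the unperturbed cocycle, and K = 2C + 1, a uniform bound for the iterates given by
   the Lasota-Yorke inequality. That inequality bounds a (F^(2N) h) by
   C lam1^N a (F^N h) + C b (F^N h); the weak term is at most b (G^N h), which decays like
   D e^(-lam N) a h on ker psi, plus b (F^N h - G^N h), which a telescoping sum bounds by
   N K^2 C |eps| a h. Taking N large and then |eps| small, F^(2N) contracts by e^(-1) on the
   F-invariant space ker psi, and iterating these blocks gives decay at rate 1/(2N). *)

Section LinearFacts.
Variables (R : realType) (V : lmodType R) (S : set V).

Lemma subspace_subr : subspace_of S -> forall x y, S x -> S y -> S (x - y).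
Proof. by case=> _ SD x y Sx Sy; rewrite addrC -scaleN1r; apply: SD. Qed.

Lemma norm_on0 (n : V -> R) : subspace_of S -> norm_on S n -> n 0 = 0.
Proof.
by case=> S0 _ [_ _ nZ _]; have := nZ 0 0 S0; rewrite scale0r normr0 mul0r.
Qed.

Lemma linear_mapB (f : V -> V) : linear_map f -> forall x y, f (x - y) = f x - f y.
Proof. by move=> lf x y; rewrite addrC -scaleN1r lf scaleN1r addrC. Qed.

End LinearFacts.

Section Cocycle.
Variables (T V : Type) (s : T -> T) (F : T -> V -> V).

Lemma LitD n m w x : Lit s F (n + m) w x = Lit s F m (iter n s w) (Lit s F n w x).
Proof. by elim: n w x => [//|n IH] w x; rewrite addSn /= IH -iterSr. Qed.

Lemma iter_closed (Om : set T) : (forall w, Om w -> Om (s w)) ->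
  forall n w, Om w -> Om (iter n s w).
Proof. by move=> Oms; elim=> [//|n IH] w Ow /=; apply/Oms/IH. Qed.

Lemma Lit_closed (S : set V) : (forall w x, S x -> S (F w x)) ->
  forall n w x, S x -> S (Lit s F n w x).
Proof. by move=> SF; elim=> [//|n IH] w x Sx /=; apply/IH/SF. Qed.

Lemma Lit_invariant (X : Type) (Om : set T) (S : set V) (psi : V -> X) :
  (forall w, Om w -> Om (s w)) -> (forall w x, S x -> S (F w x)) ->
  (forall w x, Om w -> S x -> psi (F w x) = psi x) ->
  forall n w x, Om w -> S x -> psi (Lit s F n w x) = psi x.
Proof.
move=> Oms SF psiF; elim=> [//|n IH] w x Ow Sx /=.
by rewrite IH ?psiF //; [apply: Oms | apply: SF].
Qed.

End Cocycle.

Lemma LitB (R : realType) (V : lmodType R) (T : Type) (s : T -> T) (F : T -> V -> V) :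
  (forall w, linear_map (F w)) ->
  forall n w x y, Lit s F n w (x - y) = Lit s F n w x - Lit s F n w y.
Proof.
by move=> lF; elim=> [//|n IH] w x y /=; rewrite -IH (linear_mapB (lF w)).
Qed.

Lemma LY_le_uniform (R : realType) (C l a b c : R) : 0 <= C -> 0 <= l <= 1 -> 0 <= a ->
  b <= a -> c <= C * l * a + C * b -> c <= (2 * C + 1) * a.
Proof.
move=> C0 /andP[l0 l1] a0 ba /le_trans; apply.
have la : l * a <= a by rewrite ler_piMl.
rewrite -mulrA; have := ler_wpM2l C0 la; have := ler_wpM2l C0 ba; nra.
Qed.

Lemma Lit_bounded_of_LY (R : realType) (V T : Type) (s : T -> T) (Om : set T)
    (S : set V) (a b : V -> R) (F : T -> V -> V) (C lam1 : R) :
  0 <= C -> 0 <= lam1 -> lam1 <= 1 ->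
  (forall x, S x -> 0 <= a x) -> (forall x, S x -> b x <= a x) ->
  (forall w n x, Om w -> (0 < n)%N -> S x ->
     a (Lit s F n w x) <= C * lam1 ^+ n * a x + C * b x) ->
  forall w n x, Om w -> S x -> a (Lit s F n w x) <= (2 * C + 1) * a x.
Proof.
move=> C0 l0 l1 a0 ba LY w [|n] x Ow Sx.
  by rewrite ler_peMl ?a0 //; lra.
apply: LY_le_uniform (LY _ _ _ Ow _ Sx); rewrite ?a0 ?ba //.
by rewrite exprn_ge0 ?exprn_ile1.
Qed.

Lemma eventually_geometric_lt (R : realType) (c1 c2 q1 q2 e : R) :
  `|q1| < 1 -> `|q2| < 1 -> 0 < e ->
  exists N, (0 < N)%N /\ c1 * q1 ^+ N + c2 * q2 ^+ N < e.
Proof.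
move=> q1_lt1 q2_lt1 e0.
have cvg0 : c1 * q1 ^+ n + c2 * q2 ^+ n @[n --> \oo] --> 0.
  rewrite -[X in _ --> X](addr0 0) -[X in _ --> X + _](mulr0 c1) -[X in _ --> _ + X](mulr0 c2).
  by apply: cvgD; apply: cvgM; (exact: cvg_cst || exact: cvg_expr).
have [N _ HN] := cvgr_lt 0 cvg0 e e0.
by exists N.+1; split => //; apply: HN; rewrite /= leqnSn.
Qed.

Lemma expRN1_divn_le (R : realType) (P n : nat) : (0 < P)%N ->
  expR (-1 : R) ^+ (n %/ P) <= expR 1 * expR (- P%:R^-1 * n%:R).
Proof.
move=> P0; rewrite -expRM_natr -expRD ler_expR.
have nP : (n%:R : R) <= (n %/ P).+1%:R * P%:R by rewrite -natrM ler_nat ltnW ?ltn_ceil.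
have P0' : (0 : R) < P%:R by rewrite ltr0n.
have : P%:R^-1 * n%:R <= (n %/ P).+1%:R :> R by rewrite mulrC ler_pdivrMr.
rewrite -natr1; lra.
Qed.

Lemma Lit_decay_of_block_contraction (R : realType) (V T : Type) (s : T -> T)
    (Om : set T) (S : set V) (a psi : V -> R) (F : T -> V -> V) (K q : R) (P : nat) :
  0 <= K -> 0 <= q -> (forall w, Om w -> Om (s w)) ->
  (forall w x, S x -> S (F w x)) ->
  (forall w x, Om w -> S x -> psi (F w x) = psi x) ->
  (forall w n x, Om w -> S x -> a (Lit s F n w x) <= K * a x) ->
  (forall w x, Om w -> S x -> psi x = 0 -> a (Lit s F P w x) <= q * a x) ->
  forall n w x, Om w -> S x -> psi x = 0 -> a (Lit s F n w x) <= K * q ^+ (n %/ P) * a x.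
Proof.
move=> K0 q0 Oms SF psiF bounded contract.
have blocks k w x : Om w -> S x -> psi x = 0 -> a (Lit s F (k * P) w x) <= q ^+ k * a x.
  elim: k w x => [|k IH] w x Ow Sx px; first by rewrite mul0n expr0 mul1r.
  rewrite mulSn LitD exprSr -mulrA.
  apply: le_trans (IH _ _ (iter_closed Oms _ Ow) (Lit_closed _ SF _ _ Sx) _) _.
    by rewrite (Lit_invariant Oms SF psiF).
  by rewrite ler_wpM2l ?exprn_ge0 ?contract.
move=> n w x Ow Sx px.
rewrite {1}(divn_eq n P) LitD -mulrA.
apply: le_trans (bounded _ _ _ (iter_closed Oms _ Ow) (Lit_closed _ SF _ _ Sx)) _.
by rewrite ler_wpM2l ?blocks.
Qed.

Lemma exists_block_length (R : realType) (C D lam lam1 : R) :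
  0 < lam -> 0 <= lam1 -> lam1 < 1 -> exists N, (0 < N)%N /\
    C * (2 * C + 1) * lam1 ^+ N + C * D * expR (- lam) ^+ N <= expR (-1) / 2.
Proof.
move=> lam_gt0 lam1_ge0 lam1_lt1.
have q1_lt1 : `|lam1| < 1 by rewrite ger0_norm.
have q2_lt1 : `|expR (- lam)| < 1 by rewrite ger0_norm ?expR_ge0 // expR_lt1 oppr_lt0.
have e_gt0 : 0 < expR (-1) / 2 :> R by rewrite divr_gt0 ?expR_gt0.
have [N [N_gt0 /ltW small]] :=
  eventually_geometric_lt (C * (2 * C + 1)) (C * D) q1_lt1 q2_lt1 e_gt0.
by exists N.
Qed.

(* Makes the perturbative term C N K^2 (C |eps|) of the block contraction factor at most
   e^(-1)/2. *)
Definition decay_radius (R : realType) (C : R) (N : nat) : R :=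
  (C * N%:R * (2 * C + 1) ^+ 2 * C)^-1 * (expR (-1) / 2).

Lemma decay_radius_gt0 (R : realType) (C : R) (N : nat) :
  0 < C -> (0 < N)%N -> 0 < decay_radius C N.
Proof.
move=> C_gt0 N_gt0; rewrite /decay_radius mulr_gt0 ?invr_gt0 ?divr_gt0 ?expR_gt0 //.
by rewrite !mulr_gt0 ?ltr0n ?exprn_gt0 ?addr_gt0 ?mulr_gt0.
Qed.

Section PerturbedFamily.
Variables (R : realType) (V : lmodType R) (T : Type) (s : T -> T) (Om : set T).
Hypothesis Om_s : forall w, Om w -> Om (s w).
Variables (I : set R) (L : T -> R -> V -> V).
Hypothesis I0 : I 0.
Variables (S W : set V) (a b psi : V -> R) (C D lam lam1 : R).
Hypotheses (C_gt0 : 0 < C) (lam1_ge0 : 0 <= lam1) (lam1_le1 : lam1 <= 1).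
Hypotheses (S_W : S `<=` W) (W_subr : forall x y, W x -> W y -> W (x - y)).
Hypotheses (a_ge0 : forall x, S x -> 0 <= a x) (b_ge0 : forall x, W x -> 0 <= b x)
  (b0 : b 0 = 0) (b_triangle : forall x y, W x -> W y -> b (x + y) <= b x + b y)
  (b_le_a : forall x, S x -> b x <= a x).

Local Notation K := (2 * C + 1).
Local Notation F eps := (fun w => L w eps).

Hypotheses
  (L_linear : forall w eps, I eps -> linear_map (L w eps))
  (L_S : forall w eps, I eps -> forall x, S x -> S (L w eps x))
  (L_LY : forall eps w n x, I eps -> Om w -> (0 < n)%N -> S x ->
     a (Lit s (F eps) n w x) <= C * lam1 ^+ n * a x + C * b x)
  (L_weak : forall eps w n x, I eps -> Om w -> (0 < n)%N -> W x ->
     b (Lit s (F eps) n w x) <= K * b x)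
  (L_close : forall eps w x, I eps -> Om w -> S x ->
     b (L w eps x - L w 0 x) <= C * `|eps| * a x)
  (L0_decay : forall w n x, Om w -> (0 < n)%N -> S x -> psi x = 0 ->
     b (Lit s (F 0) n w x) <= D * expR (- lam * n%:R) * a x)
  (psi_L : forall eps w x, I eps -> Om w -> S x -> psi (L w eps x) = psi x).

Let C_ge0 : 0 <= C. Proof. exact: ltW. Qed.
Let K_ge1 : 1 <= K. Proof. by rewrite lerDr mulr_ge0. Qed.
Let K_ge0 : 0 <= K. Proof. exact: le_trans K_ge1. Qed.

Lemma Lit_bounded eps w n x : I eps -> Om w -> S x -> a (Lit s (F eps) n w x) <= K * a x.
Proof.
move=> Ie Ow Sx; exact (Lit_bounded_of_LY C_ge0 lam1_ge0 lam1_le1 a_ge0 b_le_a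
  (fun w n x => @L_LY eps w n x Ie) n Ow Sx).
Qed.

Lemma Lit_weak_bounded eps w n x : I eps -> Om w -> W x ->
  b (Lit s (F eps) n w x) <= K * b x.
Proof.
case: n => [|n] Ie Ow Wx; last exact: L_weak Ie Ow (ltn0Sn n) Wx.
by rewrite ler_peMl ?b_ge0.
Qed.

Lemma Lit_perturbation_le eps n w y M : I eps -> Om w -> S y ->
  (forall k, a (Lit s (F 0) k w y) <= M) ->
  b (Lit s (F eps) n w y - Lit s (F 0) n w y) <= n%:R * (K * (C * `|eps|) * M).
Proof.
move=> Ie; elim: n w y => [|n IH] w y Ow Sy orbitM /=; first by rewrite subrr b0 mul0r.
set u := Lit s (F eps) n (s w) (L w eps y); set v := Lit s (F eps) n (s w) (L w 0 y).
set g := Lit s (F 0) n (s w) (L w 0 y).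
have Wu : W u by apply/S_W/(Lit_closed _ (fun w => L_S w Ie))/(L_S w Ie).
have Wv : W v by apply/S_W/(Lit_closed _ (fun w => L_S w Ie))/(L_S w I0).
have Wg : W g by apply/S_W/(Lit_closed _ (fun w => L_S w I0))/(L_S w I0).
have first_step : b (u - v) <= K * (C * `|eps|) * M.
  rewrite /u /v -LitB; last by move=> w'; apply: L_linear.
  have Wd : W (L w eps y - L w 0 y) := W_subr (S_W (L_S w Ie Sy)) (S_W (L_S w I0 Sy)).
  apply: le_trans (Lit_weak_bounded n Ie (Om_s Ow) Wd) _.
  rewrite -mulrA ler_wpM2l // (le_trans (L_close Ie Ow Sy)) // ler_wpM2l ?mulr_ge0 //.
  exact: (orbitM 0%N).
have later_steps : b (v - g) <= n%:R * (K * (C * `|eps|) * M).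
  have S0y : S (L w 0 y) := L_S w I0 Sy.
  by apply: IH => [||k]; [exact: Om_s | exact: S0y | exact: (orbitM k.+1)].
rewrite -[u - g](subrKA v) -natr1 mulrDl mul1r.
apply: le_trans (b_triangle (W_subr Wu Wv) (W_subr Wv Wg)) _.
by rewrite addrC lerD.
Qed.

Lemma Lit_block_contraction eps N w x : I eps -> Om w -> (0 < N)%N -> S x -> psi x = 0 ->
  a (Lit s (F eps) (N + N) w x) <= (C * K * lam1 ^+ N + C * D * expR (- lam * N%:R)
    + C * N%:R * K ^+ 2 * (C * `|eps|)) * a x.
Proof.
move=> Ie Ow N_gt0 Sx px.
set y := Lit s (F eps) N w x; set g := Lit s (F 0) N w x.
have Sy : S y := Lit_closed _ (fun w => L_S w Ie) _ _ Sx.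
have Sg : S g := Lit_closed _ (fun w => L_S w I0) _ _ Sx.
have ay : C * lam1 ^+ N * a y <= C * lam1 ^+ N * (K * a x).
  by rewrite ler_wpM2l ?mulr_ge0 ?exprn_ge0 ?Lit_bounded.
have by_ : C * b y <= C * (D * expR (- lam * N%:R) * a x
                            + N%:R * (K * (C * `|eps|) * (K * a x))).
  rewrite ler_wpM2l // -[y](subrKC g).
  apply: le_trans (b_triangle (S_W Sg) (W_subr (S_W Sy) (S_W Sg))) _.
  by rewrite lerD ?L0_decay ?Lit_perturbation_le // => k; apply: Lit_bounded.
rewrite LitD; apply: le_trans (L_LY Ie (iter_closed Om_s N Ow) N_gt0 Sy) _.
apply: le_trans (lerD ay by_) _.
by rewrite le_eqVlt; apply/orP; left; apply/eqP; ring.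
Qed.

Lemma Lit_exponential_decay N : (0 < N)%N ->
  C * K * lam1 ^+ N + C * D * expR (- lam) ^+ N <= expR (-1) / 2 ->
  forall eps n w x, I eps -> `|eps| <= decay_radius C N -> Om w -> S x -> psi x = 0 ->
  a (Lit s (F eps) n w x) <= K * expR 1 * expR (- (N + N)%:R^-1 * n%:R) * a x.
Proof.
move=> N_gt0 block_small eps n w x Ie eps_small Ow Sx px.
have radius_gt0 : 0 < C * N%:R * K ^+ 2 * C.
  by rewrite !mulr_gt0 ?ltr0n ?exprn_gt0 // (lt_le_trans ltr01).
have contraction w' x' : Om w' -> S x' -> psi x' = 0 ->
    a (Lit s (F eps) (N + N) w' x') <= expR (-1) * a x'.
  move=> Ow' Sx' px'; apply: le_trans (Lit_block_contraction Ie Ow' N_gt0 Sx' px') _.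
  rewrite ler_wpM2r ?a_ge0 // [leRHS]splitr expRM_natr lerD // mulrA.
  by rewrite -ler_pdivlMl.
have := Lit_decay_of_block_contraction K_ge0 (ltW (expR_gt0 _)) Om_s (fun w => L_S w Ie)
  (fun w x => @psi_L eps w x Ie) (fun w n x => @Lit_bounded eps w n x Ie) contraction n Ow Sx px.
move/le_trans; apply; rewrite -!mulrA ler_wpM2l // mulrA ler_wpM2r ?a_ge0 //.
by rewrite expRN1_divn_le // addn_gt0 N_gt0.
Qed.

End PerturbedFamily.

Theorem lemma3p6
  (d : measure_display) (T : measurableType d) (R : realType)
  (P : probability T R) (sigma : T -> T)
  (* sigma invertible, measurable, with measurable inverse *)
  (sigma_inv : T -> T) (Hsc1 : cancel sigma sigma_inv) (Hsc2 : cancel sigma_inv sigma)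
  (Hsm : measurable_fun setT sigma) (Hsim : measurable_fun setT sigma_inv)
  (* P-preserving *)
  (Hpres : forall A, measurable A -> P (sigma @^-1` A) = P A)
  (* ergodic *)
  (Herg : forall A, measurable A -> sigma @^-1` A = A -> P A = 0%E \/ P A = 1%E)
  (* the three Banach spaces B_ss ⊂ B_s ⊂ B_w = V *)
  (V : lmodType R) (Bs Bss : set V) (nw ns nss : V -> R)
  (Hw : banach_on setT nw) (Hs : banach_on Bs ns) (Hss : banach_on Bss nss)
  (HsubSS : Bss `<=` Bs)
  (Hnws : forall h, Bs h -> nw h <= ns h)
  (Hnsss : forall h, Bss h -> ns h <= nss h)
  (* psi *)
  (psi : V -> R) (Hpsi_lin : linear_functional psi)
  (Hpsi_nz : exists h, Bs h /\ psi h <> 0)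
  (Hpsi_bs : exists c : R, forall h, Bs h -> `|psi h| <= c * ns h)
  (Hpsi_bw : exists c : R, forall h, `|psi h| <= c * nw h)
  (* the interval of parameters *)
  (I : set R) (HI : interval_of I) (HI0 : I 0)
  (* the operators L_{w,eps} *)
  (L : T -> R -> V -> V)
  (HLlin : forall w eps, I eps -> linear_map (L w eps))
  (HLw : forall w eps, I eps -> bounded_op_on setT nw (L w eps))
  (HLs : forall w eps, I eps -> bounded_op_on Bs ns (L w eps))
  (HLss : forall w eps, I eps -> bounded_op_on Bss nss (L w eps))
  (HLmeas_s : forall eps h, I eps -> Bs h -> ball_measurable Bs ns (fun w => L w eps h))
  (HLmeas_ss : forall eps h, I eps -> Bss h -> ball_measurable Bss nss (fun w => L w eps h))
  (* constants and the full-measure invariant set Omega' *)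
  (C D lam lam1 : R) (HC : 0 < C) (HD : 0 < D) (Hlam : 0 < lam)
  (Hlam1 : 0 < lam1 < 1)
  (Om' : set T) (HOm_meas : measurable Om') (HOm_inv : sigma @^-1` Om' = Om')
  (HOm_full : P Om' = 1%E)
  (H1 : forall w n h, Om' w -> (0 < n)%N -> Bs h -> psi h = 0 ->
     ns (Lit sigma (fun w => L w 0) n w h) <= D * expR (- lam * n%:R) * ns h)
  (H2 : forall w n h, Om' w -> (0 < n)%N -> Bss h -> psi h = 0 ->
     nss (Lit sigma (fun w => L w 0) n w h) <= D * expR (- lam * n%:R) * nss h)
  (H3 : forall eps w n h, I eps -> Om' w -> (0 < n)%N -> Bs h ->
     ns (Lit sigma (fun w => L w eps) n w h) <= C * lam1 ^+ n * ns h + C * nw h)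
  (H4 : forall eps w n h, I eps -> Om' w -> (0 < n)%N -> Bss h ->
     nss (Lit sigma (fun w => L w eps) n w h) <= C * lam1 ^+ n * nss h + C * ns h)
  (H5 : forall eps w h, I eps -> Om' w -> Bs h ->
     nw (L w eps h - L w 0 h) <= C * `|eps| * ns h)
  (H6 : forall eps w h, I eps -> Om' w -> Bss h ->
     ns (L w eps h - L w 0 h) <= C * `|eps| * nss h)
  (H7 : forall eps w n h, I eps -> Om' w -> (0 < n)%N ->
     nw (Lit sigma (fun w => L w eps) n w h) <= C * nw h)
  (H8 : forall eps w h, I eps -> Om' w -> Bs h -> psi (L w eps h) = psi h) :
  exists eps0 D' lam' : R, [/\ 0 < eps0, 0 < D', 0 < lam' &
    forall eps w n, I eps -> `|eps| <= eps0 -> Om' w ->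
      (forall h, Bss h -> psi h = 0 ->
         nss (Lit sigma (fun w => L w eps) n w h) <= D' * expR (- lam' * n%:R) * nss h) /\
      (forall h, Bs h -> psi h = 0 ->
         ns (Lit sigma (fun w => L w eps) n w h) <= D' * expR (- lam' * n%:R) * ns h)].
Proof.
have [Bs_sub ns_norm _] := Hs; have [ns_ge0 _ _ ns_tri] := ns_norm.
have [V_sub nw_norm _] := Hw; have [nw_ge0 _ _ nw_tri] := nw_norm.
have [_ [nss_ge0 _ _ _] _] := Hss.
have Om_s w : Om' w -> Om' (sigma w) by move=> Ow; rewrite -HOm_inv in Ow.
have [lam1_gt0 lam1_lt1] := andP Hlam1.
have [N [N_gt0 block_small]] := exists_block_length C D Hlam (ltW lam1_gt0) lam1_lt1.
exists (decay_radius C N), ((2 * C + 1) * expR 1), (N + N)%:R^-1.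
split; first exact: decay_radius_gt0.
- by rewrite mulr_gt0 ?expR_gt0 ?addr_gt0 ?mulr_gt0.
- by rewrite invr_gt0 ltr0n addn_gt0 N_gt0.
move=> eps w n Ieps eps_small Ow; split=> h Bh ph.
- have ns_weak eps' w' m x : I eps' -> Om' w' -> (0 < m)%N -> Bs x ->
      ns (Lit sigma (fun w => L w eps') m w' x) <= (2 * C + 1) * ns x.
    move=> Ie Ow' _ Bx; exact (Lit_bounded_of_LY (ltW HC) (ltW lam1_gt0) (ltW lam1_lt1)
      ns_ge0 Hnws (fun w n x => H3 eps' w n x Ie) m Ow' Bx).
  have ns_decay w' m x : Om' w' -> (0 < m)%N -> Bss x -> psi x = 0 ->
      ns (Lit sigma (fun w => L w 0) m w' x) <= D * expR (- lam * m%:R) * nss x.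
    move=> Ow' m_gt0 Bx px; apply: le_trans (H1 _ _ _ Ow' m_gt0 (HsubSS _ Bx) px) _.
    by rewrite ler_wpM2l ?Hnsss // mulr_ge0 ?expR_ge0 ?ltW.
  exact: (Lit_exponential_decay Om_s HI0 HC (ltW lam1_gt0) (ltW lam1_lt1) HsubSS
    (subspace_subr Bs_sub) nss_ge0 ns_ge0 (norm_on0 Bs_sub ns_norm) ns_tri Hnsss HLlin
    (fun w' e Ie => (HLss w' e Ie).1) H4 ns_weak H6 ns_decay
    (fun e w' x Ie Ow' Bx => H8 e w' x Ie Ow' (HsubSS _ Bx))
    N_gt0 block_small n Ieps eps_small Ow Bh ph).
- have nw_weak eps' w' m x : I eps' -> Om' w' -> (0 < m)%N -> setT x ->
      nw (Lit sigma (fun w => L w eps') m w' x) <= (2 * C + 1) * nw x.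
    move=> Ie Ow' m_gt0 _; apply: le_trans (H7 _ _ _ _ Ie Ow' m_gt0) _.
    by rewrite ler_wpM2r ?nw_ge0 //; lra.
  have nw_decay w' m x : Om' w' -> (0 < m)%N -> Bs x -> psi x = 0 ->
      nw (Lit sigma (fun w => L w 0) m w' x) <= D * expR (- lam * m%:R) * ns x.
    move=> Ow' m_gt0 Bx px; apply: le_trans (H1 _ _ _ Ow' m_gt0 Bx px).
    by apply: Hnws; apply: Lit_closed Bx => w'' y; apply: (HLs w'' 0 HI0).1.
  exact: (Lit_exponential_decay Om_s HI0 HC (ltW lam1_gt0) (ltW lam1_lt1)
    (fun x _ => Logic.I) (fun _ _ _ _ => Logic.I) ns_ge0 nw_ge0 (norm_on0 V_sub nw_norm)
    nw_tri Hnws HLlin (fun w' e Ie => (HLs w' e Ie).1) H3 nw_weak H5 nw_decay H8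
    N_gt0 block_small n Ieps eps_small Ow Bh ph).
Qed.
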